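(* Let $\mathbb{J}=\mathbb{N}\times(\mathbb{N}\cup\{\omega\})$ with the order $(j,k)\le(m,n)$ iff either ($j=m$ and $k\le n$) or ($n=\omega$ and $k\le m$), where $\mathbb{N}\cup\{\omega\}$ is ordered with $\omega$ above all naturals. Then $\mathbb{J}$ is a dcpo, its Scott space $\Sigma\mathbb{J}$ is coherent and $S^{\ast}$-well-filtered, but $\Sigma\mathbb{J}$ is not a strong $d$-space and hence not strongly well-filtered.
   Context: $\Sigma P$ is a poset $P$ with its Scott topology (a set $U$ is Scott open if $U={\uparrow}U$ and every directed $D$ with existing supremum $\bigvee D\in U$ meets $U$). For a space $X$, ${\uparrow}$ is taken in the specialization order ($x\le y$ iff $x\in cl\{y\}$); $K(X)$ is the set of nonempty compact saturated (= upper) subsets; a family in $K(X)$ is filtered if any two members contain a common member. $X$ is coherent if the intersection of two compact saturated sets is compact. $X$ is a strong $d$-space if for every directed $D\subseteq X$, $x\in X$ and open $U$, $\bigcap_{d\in D}{\uparrow}d\cap{\uparrow}x\subseteq U$ implies ${\uparrow}d\cap{\uparrow}x\subseteq U$ for some $d\in D$. $X$ is strongly well-filtered if for every filtered $\{K_i\}\subseteq K(X)$, $G\in K(X)$ and open $U$, $\bigcap_i K_i\cap G\subseteq U$ implies $K_i\cap G\subseteq U$ for some $i$; $X$ is $S^{\ast}$-well-filtered if the same holds for all nonempty open $U$. *)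

From Stdlib Require Import List.

Set Implicit Arguments.

Section OrderDefs.
Variable P : Type.
Variable le : P -> P -> Prop.

Definition is_poset : Prop :=
  (forall x, le x x) /\
  (forall x y, le x y -> le y x -> x = y) /\
  (forall x y z, le x y -> le y z -> le x z).

Definition directed (D : P -> Prop) : Prop :=
  (exists d, D d) /\
  (forall x y, D x -> D y -> exists z, D z /\ le x z /\ le y z).

Definition is_sup (D : P -> Prop) (s : P) : Prop :=
  (forall d, D d -> le d s) /\
  (forall u, (forall d, D d -> le d u) -> le s u).

Definition is_dcpo : Prop :=
  is_poset /\ forall D, directed D -> exists s, is_sup D s.

Definition scott_open (U : P -> Prop) : Prop :=
  (forall x y, U x -> le x y -> U y) /\
  (forall D s, directed D -> is_sup D s -> U s -> exists d, D d /\ U d).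
End OrderDefs.

Section SpaceDefs.
Variable X : Type.
Variable open : (X -> Prop) -> Prop.

Definition spec (x y : X) : Prop := forall U, open U -> U x -> U y.

Definition up (A : X -> Prop) : X -> Prop := fun y => exists x, A x /\ spec x y.
Definition up1 (x : X) : X -> Prop := fun y => spec x y.

Definition saturated (A : X -> Prop) : Prop := forall y, up A y -> A y.

Definition compact (A : X -> Prop) : Prop :=
  forall F : (X -> Prop) -> Prop,
    (forall U, F U -> open U) ->
    (forall x, A x -> exists U, F U /\ U x) ->
    exists l : list (X -> Prop),
      (forall U, In U l -> F U) /\ (forall x, A x -> exists U, In U l /\ U x).

Definition inK (A : X -> Prop) : Prop :=
  (exists x, A x) /\ compact A /\ saturated A.

Definition coherent : Prop :=
  forall A B, compact A -> saturated A -> compact B -> saturated B ->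
    compact (fun x => A x /\ B x).

Definition filtered_K (I : Type) (K : I -> X -> Prop) : Prop :=
  inhabited I /\ (forall i, inK (K i)) /\
  (forall i j, exists k, forall x, K k x -> K i x /\ K j x).

Definition strong_d_space : Prop :=
  forall D : X -> Prop, directed spec D ->
  forall (x : X) (U : X -> Prop), open U ->
    (forall y, (forall d, D d -> up1 d y) -> up1 x y -> U y) ->
    exists d, D d /\ forall y, up1 d y -> up1 x y -> U y.

Definition strongly_well_filtered : Prop :=
  forall (I : Type) (K : I -> X -> Prop), filtered_K K ->
  forall (G : X -> Prop), inK G ->
  forall U : X -> Prop, open U ->
    (forall y, (forall i, K i y) -> G y -> U y) ->
    exists i, forall y, K i y -> G y -> U y.

Definition S_star_well_filtered : Prop :=
  forall (I : Type) (K : I -> X -> Prop), filtered_K K ->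
  forall (G : X -> Prop), inK G ->
  forall U : X -> Prop, open U -> (exists u, U u) ->
    (forall y, (forall i, K i y) -> G y -> U y) ->
    exists i, forall y, K i y -> G y -> U y.
End SpaceDefs.

(** * The poset J = N x (N ∪ {omega}); None encodes omega *)
Definition Nw := option nat.

Definition Nw_le (a b : Nw) : Prop :=
  match a, b with
  | _, None => True
  | Some x, Some y => x <= y
  | None, Some _ => False
  end.

Definition J := (nat * Nw)%type.

Definition J_le (p q : J) : Prop :=
  let (j, k) := p in let (m, n) := q in
  (j = m /\ Nw_le k n) \/ (n = None /\ Nw_le k (Some m)).

Definition SigmaJ_open : (J -> Prop) -> Prop := scott_open J_le.

(* The Scott opens of J are the upper sets U such that (c, omega) in U forces
   (c, k) in U for some k.  Consequently a subset of J is compact exactly when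
   its finite points occupy finitely many columns, which makes coherence
   immediate.  For S*-well-filteredness, a nonempty open U contains a tail
   {(p, omega) | p >= k0} of the top row, so for G compact the part of G outside
   U is dominated by finitely many of its own points; a filtered family whose
   meet misses those points eventually avoids all of them.  Strong d-ness fails
   for the column D = {(0, k)} and x = (1, 1): the only upper bound of D is
   (0, omega), which is not above x, yet (k+1, omega) lies above both (0, k) and
   x.  Strong well-filteredness implies strong d-ness in any space. *)

From Stdlib Require Import List Lia Classical Arith.
Import ListNotations.

Lemma nat_least (P : nat -> Prop) :
  (exists n, P n) -> exists n, P n /\ forall m, P m -> n <= m.
Proof.
  intros Hex.
  destruct (dec_inh_nat_subset_has_unique_least_element P (fun n => classic (P n)) Hex)
    as [n [Hn _]].
  exists n; exact Hn.
Qed.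

Lemma monotone_common_witness (P : nat -> nat -> Prop) N :
  (forall m k k', k <= k' -> P m k -> P m k') ->
  (forall m, m < N -> exists k, P m k) -> exists K, forall m, m < N -> P m K.
Proof.
  intros Hmono Hex. induction N as [|N IH].
  - exists 0. intros m Hm. lia.
  - destruct IH as [K HK]; [intros m Hm; apply Hex; lia|].
    destruct (Hex N (Nat.lt_succ_diag_r N)) as [k Hk]. exists (max K k).
    intros m Hm. destruct (Nat.eq_dec m N) as [->|Hne].
    + apply (Hmono N k); [lia|exact Hk].
    + apply (Hmono m K); [lia|apply HK; lia].
Qed.

Section Sups.
Context {P : Type} {le : P -> P -> Prop}.

Lemma is_sup_greatest {D : P -> Prop} {d} :
  D d -> (forall x, D x -> le x d) -> is_sup le D d.
Proof. intros Dd Hd. split; auto. Qed.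

Lemma is_sup_unique {D : P -> Prop} {s t} :
  (forall x y, le x y -> le y x -> x = y) -> is_sup le D s -> is_sup le D t -> s = t.
Proof. intros Hanti [Hs Hs'] [Ht Ht']. apply Hanti; [apply Hs'|apply Ht']; assumption. Qed.
End Sups.

Section Spaces.
Context {X : Type} {open : (X -> Prop) -> Prop}.

Lemma spec_refl x : spec open x x.
Proof. intros U _ Ux; exact Ux. Qed.

Lemma spec_trans {x y z} : spec open x y -> spec open y z -> spec open x z.
Proof. intros Hxy Hyz U HU Ux. exact (Hyz U HU (Hxy U HU Ux)). Qed.

Lemma compact_of_has_least (A : X -> Prop) :
  (forall x, A x -> exists a, A a /\ forall y, A y -> spec open a y) -> compact open A.
Proof.
  intros Hleast F HF Hcov.
  destruct (classic (exists x, A x)) as [[x Ax]|Hempty].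
  - destruct (Hleast x Ax) as [a [Aa Ha]]. destruct (Hcov a Aa) as [U [FU Ua]].
    exists [U]. split.
    + intros V [<-|[]]; exact FU.
    + intros y Ay. exists U. split; [left; reflexivity|exact (Ha y Ay U (HF U FU) Ua)].
  - exists nil. split; [intros _ []|]. intros x Ax. exfalso; eauto.
Qed.

Lemma compact_union (A B C : X -> Prop) :
  compact open B -> compact open C -> (forall x, A x <-> B x \/ C x) -> compact open A.
Proof.
  intros HB HC HA F HF Hcov.
  destruct (HB F HF) as [lB [HlB HcB]]; [intros x Bx; apply Hcov, HA; auto|].
  destruct (HC F HF) as [lC [HlC HcC]]; [intros x Cx; apply Hcov, HA; auto|].
  exists (lB ++ lC). split.
  - intros U HU. apply in_app_or in HU as [HU|HU]; auto.
  - intros x Ax. apply HA in Ax as [Bx|Cx].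
    + destruct (HcB x Bx) as [U [HU Ux]]. exists U. split; [apply in_or_app; auto|exact Ux].
    + destruct (HcC x Cx) as [U [HU Ux]]. exists U. split; [apply in_or_app; auto|exact Ux].
Qed.

Lemma compact_bigunion (B : nat -> X -> Prop) N (A : X -> Prop) :
  (forall m, m < N -> compact open (B m)) ->
  (forall x, A x <-> exists m, m < N /\ B m x) -> compact open A.
Proof.
  revert A. induction N as [|N IH]; intros A HB HA.
  - apply compact_of_has_least. intros x Ax. apply HA in Ax as [m [Hm _]]. lia.
  - apply (compact_union A (fun x => exists m, m < N /\ B m x) (B N)).
    + apply IH; [intros m Hm; apply HB; lia|intros x; reflexivity].
    + apply HB; lia.
    + intros x. rewrite HA. split.
      * intros [m [Hm Bx]]. destruct (Nat.eq_dec m N) as [->|Hne]; [right; exact Bx|].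
        left. exists m. split; [lia|exact Bx].
      * intros [[m [Hm Bx]]|Bx]; [exists m|exists N]; split; auto; lia.
Qed.

Lemma compact_increasing_cover {A : X -> Prop} {W : nat -> X -> Prop} :
  compact open A -> (forall N, open (W N)) ->
  (forall N N' x, N <= N' -> W N x -> W N' x) ->
  (forall x, A x -> exists N, W N x) -> exists N, forall x, A x -> W N x.
Proof.
  intros HA HW Hmono Hcov.
  destruct (HA (fun U => exists N, U = W N)) as [l [Hl Hsub]].
  - intros U [N ->]. apply HW.
  - intros x Ax. destruct (Hcov x Ax) as [N WN]. eauto.
  - assert (Hbound : exists M, forall U, In U l -> exists N, N <= M /\ U = W N).
    { clear Hsub. induction l as [|U l IH].
      - exists 0. intros _ [].
      - destruct IH as [M HM]; [intros V Vl; apply Hl; right; exact Vl|].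
        destruct (Hl U (or_introl eq_refl)) as [N ->]. exists (max M N).
        intros V [<-|Vl]; [exists N; split; [lia|reflexivity]|].
        destruct (HM V Vl) as [N' [HN' ->]]. exists N'. split; [lia|reflexivity]. }
    destruct Hbound as [M HM]. exists M. intros x Ax.
    destruct (Hsub x Ax) as [U [Ul Ux]]. destruct (HM U Ul) as [N [HN ->]]. eauto.
Qed.

Lemma up1_inK x : inK open (up1 open x).
Proof.
  split; [exists x; apply spec_refl|split].
  - apply compact_of_has_least. intros y _. exists x. split; [apply spec_refl|].
    intros z Hz; exact Hz.
  - intros y [z [Hxz Hzy]]. exact (spec_trans Hxz Hzy).
Qed.

Lemma filtered_K_avoid_list (I : Type) (K : I -> X -> Prop) (P : X -> Prop) (L : list X) :
  filtered_K open K -> (forall t, In t L -> P t -> exists i, ~ K i t) ->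
  exists j, forall t, In t L -> P t -> ~ K j t.
Proof.
  intros [[i0] [_ Hfilt]]. induction L as [|t L IH]; intros Hout.
  - exists i0. intros t [].
  - destruct IH as [j Hj]; [intros s Ls; apply Hout; right; exact Ls|].
    destruct (classic (P t)) as [Pt|Pt].
    + destruct (Hout t (or_introl eq_refl) Pt) as [i Hi].
      destruct (Hfilt i j) as [k Hk]. exists k.
      intros s [<-|Ls] Ps Ks; apply Hk in Ks as [Ki Kj]; [exact (Hi Ki)|exact (Hj s Ls Ps Kj)].
    + exists j. intros s [<-|Ls] Ps; [contradiction|exact (Hj s Ls Ps)].
Qed.

Lemma filtered_K_meet_inside {I : Type} {K : I -> X -> Prop} {G U : X -> Prop} {L : list X} :
  filtered_K open K ->
  (forall y, G y -> ~ U y -> exists t, In t L /\ G t /\ ~ U t /\ spec open y t) ->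
  (forall y, (forall i, K i y) -> G y -> U y) ->
  exists i, forall y, K i y -> G y -> U y.
Proof.
  intros HK Hdom Hmeet.
  destruct (filtered_K_avoid_list I K (fun t => G t /\ ~ U t) L HK) as [j Hj].
  { intros t _ [Gt Ut]. apply NNPP; intro Hall. apply Ut, Hmeet; [|exact Gt].
    intros i. apply NNPP; intro Ki. apply Hall; eauto. }
  exists j. intros y Ky Gy. apply NNPP; intro Uy.
  destruct (Hdom y Gy Uy) as [t [Lt [Gt [Ut Hyt]]]].
  destruct HK as [_ [HKi _]]. destruct (HKi j) as [_ [_ Hsat]].
  apply (Hj t Lt (conj Gt Ut)), Hsat. exists y; auto.
Qed.

Lemma strong_d_space_of_strongly_well_filtered :
  strongly_well_filtered open -> strong_d_space open.
Proof.
  intros Hswf D [[d0 Dd0] Hdir] x U HU Hmeet.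
  assert (HK : filtered_K open (fun d : {d | D d} => up1 open (proj1_sig d))).
  { split; [constructor; exists d0; exact Dd0|split].
    - intros [d Dd]. apply up1_inK.
    - intros [d Dd] [e De]. destruct (Hdir d e Dd De) as [f [Df [Hdf Hef]]].
      exists (exist _ f Df). intros y Hfy. split; eapply spec_trans; eauto. }
  destruct (Hswf _ _ HK (up1 open x) (up1_inK x) U HU) as [[d Dd] Hd].
  - intros y Hy Hxy. apply Hmeet; [|exact Hxy]. intros d Dd. exact (Hy (exist _ d Dd)).
  - exists d. split; [exact Dd|exact Hd].
Qed.
End Spaces.

Lemma Nw_le_refl n : Nw_le n n.
Proof. destruct n; simpl; auto. Qed.

Lemma Nw_le_trans {a b c} : Nw_le a b -> Nw_le b c -> Nw_le a c.
Proof. destruct a, b, c; simpl; intros; auto; try lia; contradiction. Qed.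

Lemma J_le_refl x : J_le x x.
Proof. destruct x; left; split; [reflexivity|apply Nw_le_refl]. Qed.

Lemma J_le_trans {x y z} : J_le x y -> J_le y z -> J_le x z.
Proof.
  destruct x as [j k], y as [m n], z as [p q]; simpl.
  intros [[<- H1]|[-> H1]] [[<- H2]|[H0 H2]]; subst.
  - left; split; [reflexivity|eapply Nw_le_trans; eauto].
  - right; split; [reflexivity|eapply Nw_le_trans; eauto].
  - destruct q; simpl in H2; [contradiction|right; split; auto].
  - simpl in H2; contradiction.
Qed.

Lemma J_le_antisym x y : J_le x y -> J_le y x -> x = y.
Proof.
  destruct x as [j [k|]], y as [m [n|]]; simpl;
  intros [[H0 H1]|[H0 H1]] [[H2 H3]|[H2 H3]]; subst; simpl in *;
  try contradiction; try discriminate; try (f_equal; f_equal; lia); auto.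
Qed.

Lemma J_top_max {m z} : J_le (m, None) z -> z = (m, None).
Proof.
  destruct z as [p [q|]]; simpl; intros [[-> H]|[H0 H]]; simpl in H;
  try contradiction; try discriminate; reflexivity.
Qed.

Lemma J_le_finite {x p q} : J_le x (p, Some q) -> exists k, x = (p, Some k) /\ k <= q.
Proof.
  destruct x as [j [k|]]; simpl; intros [[-> H]|[H _]]; simpl in H;
  try contradiction; try discriminate; eauto.
Qed.

Definition column (c : nat) (x : J) : Prop := exists k, x = (c, Some k).

Lemma column_directed c : directed J_le (column c).
Proof.
  split; [exists (c, Some 0), 0; reflexivity|].
  intros x y [a ->] [b ->]. exists (c, Some (max a b)).
  split; [exists (max a b); reflexivity|split; left; split; simpl; auto; lia].
Qed.

Lemma column_sup {D : J -> Prop} {c} :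
  (forall x, D x -> column c x) -> (forall K, exists k, K <= k /\ D (c, Some k)) ->
  is_sup J_le D (c, None).
Proof.
  intros Hcol Hcof. split.
  - intros x Dx. destruct (Hcol x Dx) as [k ->]. left. split; [reflexivity|exact I].
  - intros [p [q|]] Hub.
    + destruct (Hcof (S q)) as [k [Hk Dk]].
      destruct (J_le_finite (Hub _ Dk)) as [k' [Heq Hk']]. injection Heq as _ <-. lia.
    + destruct (Hcof (S p)) as [k [Hk Dk]].
      destruct (Hub _ Dk) as [[-> _]|[_ Hkp]]; [apply J_le_refl|simpl in Hkp; lia].
Qed.

Lemma column_is_sup c : is_sup J_le (column c) (c, None).
Proof. apply column_sup; [auto|]. intros K. exists K. split; [lia|exists K; reflexivity]. Qed.

(* A directed set without a greatest element cannot meet the top row (whose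
   points are maximal), so it is an unbounded subset of a single column. *)
Lemma directed_J_cases {D : J -> Prop} : directed J_le D ->
  (exists d, D d /\ forall x, D x -> J_le x d) \/
  (exists c, (forall x, D x -> column c x) /\ forall K, exists k, K <= k /\ D (c, Some k)).
Proof.
  intros [[d0 Dd0] Hdir].
  destruct (classic (exists d, D d /\ forall x, D x -> J_le x d)) as [Hgr|Hnone];
    [left; exact Hgr|right].
  assert (Hfin : forall x, D x -> exists m k, x = (m, Some k)).
  { intros [m [k|]] Dx; eauto. exfalso. apply Hnone. exists (m, None). split; [exact Dx|].
    intros x Dx'. destruct (Hdir x (m, None) Dx' Dx) as [z [_ [Hxz Hmz]]].
    rewrite (J_top_max Hmz) in Hxz. exact Hxz. }
  destruct (Hfin d0 Dd0) as [c [k0 ->]].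
  assert (Hcol : forall x, D x -> column c x).
  { intros x Dx. destruct (Hdir x (c, Some k0) Dx Dd0) as [z [Dz [Hxz Hcz]]].
    destruct (Hfin z Dz) as [p [q ->]].
    destruct (J_le_finite Hcz) as [? [Heq _]]. injection Heq as <- _.
    destruct (J_le_finite Hxz) as [k' [-> _]]. exists k'; reflexivity. }
  assert (Hincr : forall k, D (c, Some k) -> exists k', k < k' /\ D (c, Some k')).
  { intros k Dk. apply NNPP; intro Hno. apply Hnone. exists (c, Some k). split; [exact Dk|].
    intros x Dx. destruct (Hcol x Dx) as [k' ->]. left. split; [reflexivity|simpl].
    destruct (le_lt_dec k' k) as [Hle|Hlt]; [exact Hle|exfalso; eauto]. }
  exists c. split; [exact Hcol|].
  intros K. induction K as [|K [k [HKk Dk]]]; [exists k0; split; [lia|exact Dd0]|].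
  destruct (Hincr k Dk) as [k' [Hkk' Dk']]. exists k'. split; [lia|exact Dk'].
Qed.

Lemma J_dcpo : is_dcpo J_le.
Proof.
  split; [split; [exact J_le_refl|split; [exact J_le_antisym|exact @J_le_trans]]|].
  intros D HD. destruct (directed_J_cases HD) as [[d [Dd Hd]]|[c [Hcol Hcof]]].
  - exists d. apply is_sup_greatest; assumption.
  - exists (c, None). apply column_sup; assumption.
Qed.

Lemma scott_open_J_intro (U : J -> Prop) :
  (forall x y, U x -> J_le x y -> U y) ->
  (forall c, U (c, None) -> exists k, U (c, Some k)) -> SigmaJ_open U.
Proof.
  intros Hup Hcol. split; [exact Hup|].
  intros D s HD Hs Us.
  destruct (directed_J_cases HD) as [[d [Dd Hd]]|[c [HDc Hcof]]].
  - assert (s = d) as -> by exact (is_sup_unique J_le_antisym Hs (is_sup_greatest Dd Hd)).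
    exists d. split; assumption.
  - assert (s = (c, None)) as -> by exact (is_sup_unique J_le_antisym Hs (column_sup HDc Hcof)).
    destruct (Hcol c Us) as [k Uk]. destruct (Hcof k) as [k' [Hkk' Dk']].
    exists (c, Some k'). split; [exact Dk'|].
    apply (Hup _ _ Uk). left. split; [reflexivity|exact Hkk'].
Qed.

Lemma scott_open_J_up {U x y} : SigmaJ_open U -> U x -> J_le x y -> U y.
Proof. intros [Hup _]. apply Hup. Qed.

Lemma scott_open_J_col {U c} : SigmaJ_open U -> U (c, None) -> exists k, U (c, Some k).
Proof.
  intros [_ Hsc] Uc.
  destruct (Hsc _ _ (column_directed c) (column_is_sup c) Uc) as [d [[k ->] Ud]].
  exists k; exact Ud.
Qed.

Lemma spec_J_iff x y : spec SigmaJ_open x y <-> J_le x y.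
Proof.
  split; [|intros Hxy U HU Ux; exact (scott_open_J_up HU Ux Hxy)].
  intros Hxy. apply NNPP; intro Hn.
  assert (Hopen : SigmaJ_open (fun z => ~ J_le z y)).
  { apply scott_open_J_intro.
    - intros a b Ha Hab Hb. exact (Ha (J_le_trans Hab Hb)).
    - intros c Hc. apply NNPP; intro Hall. apply Hc, (proj2 (column_is_sup c)).
      intros d [k ->]. apply NNPP; intro Hk. eauto. }
  exact (Hxy _ Hopen Hn (J_le_refl y)).
Qed.

Lemma scott_open_J_top_tail {U u} :
  SigmaJ_open U -> U u -> exists k0, forall p, k0 <= p -> U (p, None).
Proof.
  intros HU Uu.
  assert (Hfin : exists m k, U (m, Some k)).
  { destruct u as [m [k|]]; [eauto|]. destruct (scott_open_J_col HU Uu) as [k Uk]. eauto. }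
  destruct Hfin as [m [k Uk]]. exists k. intros p Hp.
  apply (scott_open_J_up HU Uk). right. split; [reflexivity|exact Hp].
Qed.

Definition columns_bounded (A : J -> Prop) : Prop :=
  exists N, forall m k, A (m, Some k) -> m < N.

(* Open, and misses the least finite point of A in every column m >= N. *)
Definition skip_column_minima (A : J -> Prop) (N : nat) (x : J) : Prop :=
  fst x < N \/ (forall k, ~ A (fst x, Some k)) \/
  exists k, A (fst x, Some k) /\ Nw_le (Some (S k)) (snd x).

Lemma skip_column_minima_open A N : SigmaJ_open (skip_column_minima A N).
Proof.
  unfold skip_column_minima. apply scott_open_J_intro.
  - intros [m n] [p q] Hx Hle; cbn [fst snd] in *.
    destruct Hle as [[<- Hnq]|[-> _]].
    + destruct Hx as [Hm|[Hno|[k [Ak Hk]]]]; [left; exact Hm|right; left; exact Hno|].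
      right; right. exists k. split; [exact Ak|exact (Nw_le_trans Hk Hnq)].
    + destruct (classic (exists k, A (p, Some k))) as [[k Ak]|Hno].
      * right; right. exists k. split; [exact Ak|exact I].
      * right; left. intros k Ak. eauto.
  - intros c Hc; cbn [fst snd] in *.
    destruct Hc as [Hm|[Hno|[k [Ak _]]]];
      [exists 0; left; exact Hm|exists 0; right; left; exact Hno|].
    exists (S k). right; right. exists k. split; [exact Ak|apply Nw_le_refl].
Qed.

Lemma columns_bounded_of_compact {A} : compact SigmaJ_open A -> columns_bounded A.
Proof.
  intros HA.
  destruct (compact_increasing_cover HA (skip_column_minima_open A)) as [N HN].
  - intros N N' x HNN' [Hx|Hx]; [left; lia|right; exact Hx].
  - intros x _. exists (S (fst x)). left. lia.
  - exists N. intros m k Amk. apply NNPP; intro Hm.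
    destruct (nat_least (fun k => A (m, Some k))) as [k0 [Ak0 Hmin]]; [eauto|].
    destruct (HN _ Ak0) as [H|[H|[k' [Ak' Hk']]]]; cbn [fst snd] in *.
    + lia.
    + exact (H k0 Ak0).
    + specialize (Hmin k' Ak'). simpl in Hk'. lia.
Qed.

(* A nonempty open set meeting the top row contains a tail of it, so only
   finitely many top points remain to be covered. *)
Lemma top_row_compact A : (forall x, A x -> snd x = None) -> compact SigmaJ_open A.
Proof.
  intros Htop F HF Hcov.
  destruct (classic (exists p, A (p, None))) as [[p Ap]|Hempty].
  - destruct (Hcov _ Ap) as [U [FU Up]].
    destruct (scott_open_J_col (HF U FU) Up) as [k0 Uk0].
    assert (Hrest : compact SigmaJ_open (fun x => A x /\ fst x < k0)).
    { apply (compact_bigunion (fun q x => A x /\ x = (q, None)) k0).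
      - intros q _. apply compact_of_has_least. intros x [Ax ->].
        exists (q, None). split; [split; [exact Ax|reflexivity]|].
        intros y [_ ->]. apply spec_refl.
      - intros [q n]. specialize (Htop (q, n)). cbn [fst snd] in *. split.
        + intros [Ax Hq]. exists q.
          split; [exact Hq|split; [exact Ax|rewrite (Htop Ax); reflexivity]].
        + intros [q' [Hq' [Ax Heq]]]. injection Heq as -> ->. auto. }
    destruct (Hrest F HF) as [l [Hl Hcl]]; [intros x [Ax _]; apply Hcov, Ax|].
    exists (U :: l). split; [intros V [<-|Vl]; auto|].
    intros [q n] Ax. destruct (le_lt_dec k0 q) as [Hq|Hq].
    + exists U. split; [left; reflexivity|]. specialize (Htop _ Ax). simpl in Htop. subst n.
      apply (scott_open_J_up (HF U FU) Uk0). right. split; [reflexivity|exact Hq].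
    + destruct (Hcl (q, n) (conj Ax Hq)) as [V [Vl Vx]]. exists V. split; [right|]; assumption.
  - exists nil. split; [intros _ []|]. intros [q n] Ax.
    specialize (Htop _ Ax). simpl in Htop. subst n. exfalso; eauto.
Qed.

Lemma compact_of_columns_bounded A : columns_bounded A -> compact SigmaJ_open A.
Proof.
  intros [N HN].
  apply (compact_union A (fun x => exists m, m < N /\ (A x /\ column m x))
                       (fun x => A x /\ snd x = None)).
  - apply (compact_bigunion (fun m x => A x /\ column m x) N); [|intros x; reflexivity].
    intros m _. apply compact_of_has_least. intros x [Ax [k ->]].
    destruct (nat_least (fun k => A (m, Some k))) as [k0 [Ak0 Hmin]]; [eauto|].
    exists (m, Some k0). split; [split; [exact Ak0|exists k0; reflexivity]|].
    intros y [Ay [k' ->]]. apply spec_J_iff. left. split; [reflexivity|exact (Hmin k' Ay)].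
  - apply top_row_compact. intros x [_ H]; exact H.
  - intros [m [k|]]; split.
    + intros Ax. left. exists m. split; [exact (HN m k Ax)|split; [exact Ax|exists k; reflexivity]].
    + intros [[m' [_ [Ax _]]]|[Ax _]]; exact Ax.
    + intros Ax. right. split; [exact Ax|reflexivity].
    + intros [[m' [_ [Ax _]]]|[Ax _]]; exact Ax.
Qed.

Lemma J_coherent : coherent SigmaJ_open.
Proof.
  intros A B HA _ _ _. apply compact_of_columns_bounded.
  destruct (columns_bounded_of_compact HA) as [N HN].
  exists N. intros m k [Amk _]. eauto.
Qed.

Definition box (B : nat) : list J := list_prod (seq 0 B) (None :: map Some (seq 0 B)).

Lemma in_box_top B m : m < B -> In (m, None) (box B).
Proof. intros Hm. apply in_prod; [apply in_seq; lia|left; reflexivity]. Qed.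

Lemma in_box_finite B m k : m < B -> k < B -> In (m, Some k) (box B).
Proof. intros Hm Hk. apply in_prod; [apply in_seq; lia|right; apply in_map, in_seq; lia]. Qed.

Lemma finite_dominating_list {G U : J -> Prop} :
  inK SigmaJ_open G -> SigmaJ_open U -> (exists u, U u) ->
  exists L, forall y, G y -> ~ U y ->
    exists t, In t L /\ G t /\ ~ U t /\ spec SigmaJ_open y t.
Proof.
  intros [_ [HGc HGs]] HU [u Uu].
  destruct (columns_bounded_of_compact HGc) as [N HN].
  destruct (scott_open_J_top_tail HU Uu) as [k0 Hk0].
  destruct (monotone_common_witness (fun m k => U (m, None) -> U (m, Some k)) N) as [Kb HKb].
  - intros m k k' Hkk' Hk Um. apply (scott_open_J_up HU (Hk Um)).
    left. split; [reflexivity|exact Hkk'].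
  - intros m _. destruct (classic (U (m, None))) as [Um|Um].
    + destruct (scott_open_J_col HU Um) as [k Uk]. eauto.
    + exists 0. intros Um'; contradiction.
  - assert (Htop : forall p, ~ U (p, None) -> p < k0).
    { intros p Up. destruct (le_lt_dec k0 p) as [Hp|Hp]; [exfalso; eauto|exact Hp]. }
    exists (box (N + Kb + k0)). intros [p [k|]] Gy Uy.
    + assert (Hp : p < N) by eauto.
      destruct (classic (U (p, None))) as [Up|Up].
      * assert (Hk : k < Kb).
        { destruct (le_lt_dec Kb k) as [Hk|Hk]; [exfalso|exact Hk].
          apply Uy, (scott_open_J_up HU (HKb p Hp Up)). left. split; [reflexivity|exact Hk]. }
        exists (p, Some k). split; [apply in_box_finite; lia|].
        split; [exact Gy|split; [exact Uy|apply spec_refl]].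
      * assert (Hle : spec SigmaJ_open (p, Some k) (p, None)).
        { apply spec_J_iff. left. split; [reflexivity|exact I]. }
        exists (p, None). split; [apply in_box_top; specialize (Htop p Up); lia|].
        split; [apply HGs; exists (p, Some k); auto|split; [exact Up|exact Hle]].
    + exists (p, None). split; [apply in_box_top; specialize (Htop p Uy); lia|].
      split; [exact Gy|split; [exact Uy|apply spec_refl]].
Qed.

Lemma J_S_star_well_filtered : S_star_well_filtered SigmaJ_open.
Proof.
  intros I K HK G HG U HU Hne Hmeet.
  destruct (finite_dominating_list HG HU Hne) as [L HL].
  exact (filtered_K_meet_inside HK HL Hmeet).
Qed.

Lemma upper_bound_of_column0_not_above_11 y :
  (forall k, J_le (0, Some k) y) -> ~ J_le (1, Some 1) y.
Proof.
  intros Hy H1. assert (H0 : J_le (0, None) y).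
  { apply (proj2 (column_is_sup 0)). intros d [k ->]. apply Hy. }
  rewrite (J_top_max H0) in H1. simpl in H1. destruct H1 as [[H _]|[_ H]]; [discriminate|lia].
Qed.

Lemma J_not_strong_d_space : ~ strong_d_space SigmaJ_open.
Proof.
  intros Hsd.
  assert (HD : directed (spec SigmaJ_open) (column 0)).
  { destruct (column_directed 0) as [Hne Hdir]. split; [exact Hne|].
    intros x y Dx Dy. destruct (Hdir x y Dx Dy) as [z [Dz [Hxz Hyz]]].
    exists z. split; [exact Dz|split; apply spec_J_iff; assumption]. }
  assert (Hempty : SigmaJ_open (fun _ => False)).
  { apply scott_open_J_intro; [auto|intros _ []]. }
  destruct (Hsd _ HD (1, Some 1) _ Hempty) as [d [[k ->] Hd]].
  - intros y Hy H1. apply spec_J_iff in H1.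
    apply (upper_bound_of_column0_not_above_11 y); [|exact H1].
    intros k. apply spec_J_iff, Hy. exists k; reflexivity.
  - apply (Hd (S k, None)); apply spec_J_iff; right; (split; [reflexivity|simpl; lia]).
Qed.

Theorem mainTheorem13 :
  is_dcpo J_le /\
  coherent SigmaJ_open /\
  S_star_well_filtered SigmaJ_open /\
  ~ strong_d_space SigmaJ_open /\
  ~ strongly_well_filtered SigmaJ_open.
Proof.
  split; [exact J_dcpo|].
  split; [exact J_coherent|].
  split; [exact J_S_star_well_filtered|].
  split; [exact J_not_strong_d_space|].
  intros Hswf. apply J_not_strong_d_space, strong_d_space_of_strongly_well_filtered, Hswf.
Qed.
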